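(* Let $\mathbb T$ be a geometric theory over $\Sigma$ and $\mathbb X=(X_1\rightrightarrows X_0)$ a model groupoid for $\mathbb T$ that is conservative. If $\mathbb X$ eliminates parameters when given the trivial indexing (the parameters are the elements of $\bigcup_{M\in X_0}M$, each element being interpreted as itself, so each element of each model is denoted by exactly one parameter), then $\mathbb T$ is decidable: for each pair of variables $x,x'$ of the same sort there is a geometric formula, written $x\neq x'$, in context $x,x'$ such that $\mathbb T$ proves $x=x'\wedge x\neq x'\vdash_{x,x'}\bot$ and $\top\vdash_{x,x'}x=x'\vee x\neq x'$.
   Context: Indexings and definables. Let $\Sigma$ be a (possibly many-sorted) first-order signature and $\mathbb T$ a geometric theory over $\Sigma$; $\mathbb T\text{-}\mathbf{Mod}(\mathbf{Set})$ is the category of set-based models and homomorphisms. A model groupoid is a small subgroupoid $\mathbb X=(X_1\rightrightarrows X_0)$ of $\mathbb T\text{-}\mathbf{Mod}(\mathbf{Set})$. Given, for each sort $k$, a set $I_k$ of parameters, an $I$-indexing of a $\Sigma$-structure $M$ is, for each sort $k$, a partial surjection from $I_k$ onto $M_k$; parameters in its domain are said to be interpreted in $M$ and denote their image. For a geometric formula $\varphi$ over $\Sigma$ in context $\vec x$, $[\![\vec x:\varphi]\!]_{\mathbb X}=\{\langle\vec n,M\rangle: M\in X_0,\ M\models\varphi(\vec n)\}$. For a tuple of parameters $\vec m$ and geometric formula $\psi(\vec x,\vec y)$, $[\![\vec x,\vec m:\psi]\!]_{\mathbb X}=\{\langle\vec n,M\rangle:\vec m\text{ interpreted in }M,\ M\models\psi(\vec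 n,\vec m)\}$; its orbit is $\overline{[\![\vec x,\vec m:\psi]\!]}_{\mathbb X}=\{\langle\vec n,N\rangle:\exists(\alpha:M\to N)\in X_1,\ \langle\alpha^{-1}(\vec n),M\rangle\in[\![\vec x,\vec m:\psi]\!]_{\mathbb X}\}$. $\mathbb X$ is conservative if $[\![\vec x:\varphi]\!]_{\mathbb X}\subseteq[\![\vec x:\psi]\!]_{\mathbb X}$ implies $\mathbb T$ proves $\varphi\vdash_{\vec x}\psi$; $\mathbb X$ eliminates parameters if each orbit $\overline{[\![\vec x,\vec m:\psi]\!]}_{\mathbb X}$ equals $[\![\vec x:\varphi]\!]_{\mathbb X}$ for some geometric formula $\varphi$ over $\Sigma$ without parameters. *)

From Stdlib Require Import List ProofIrrelevance.
Import ListNotations.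

Record signature := {
  sort : Type;
  fsym : Type; fdom : fsym -> list sort; fcod : fsym -> sort;
  rsym : Type; rdom : rsym -> list sort }.

Section Syntax.
Variable S : signature.

(* de Bruijn variables in a context (a list of sorts) *)
Inductive var : list (sort S) -> sort S -> Type :=
| vz : forall G k, var (k :: G) k
| vs : forall G k k', var G k -> var (k' :: G) k.

Inductive term (G : list (sort S)) : sort S -> Type :=
| tvar : forall k, var G k -> term G k
| tfun : forall f : fsym S, terms G (fdom S f) -> term G (fcod S f)
with terms (G : list (sort S)) : list (sort S) -> Type :=
| tnil : terms G []
| tcons : forall k l, term G k -> terms G l -> terms G (k :: l).

Inductive formula : list (sort S) -> Type :=
| fEq : forall G k, term G k -> term G k -> formula G
| fRel : forall G (R : rsym S), terms G (rdom S R) -> formula G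
| fTop : forall G, formula G
| fAnd : forall G, formula G -> formula G -> formula G
| fOr : forall G (I : Type), (I -> formula G) -> formula G
| fEx : forall G k, formula (k :: G) -> formula G.

Definition fBot G : formula G := fOr G False (fun f => match f with end).
Definition fOr2 G (p q : formula G) : formula G :=
  fOr G bool (fun b => if b then p else q).

Definition ren (G D : list (sort S)) := forall k, var G k -> var D k.
Definition sub (G D : list (sort S)) := forall k, var G k -> term D k.

Definition ren_cons G D k' (x : var D k') (r : ren G D) : ren (k' :: G) D :=
  fun k v =>
  match v in var G0 k0
    return match G0 with
           | [] => unit
           | k1 :: G1 => var D k1 -> ren G1 D -> var D k0 end with
  | vz _ _ => fun x _ => x
  | vs _ _ _ v' => fun _ r => r _ v'
  end x r.

Arguments ren_cons {G D k'} x r [k] v.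

Definition ren_wk G k' : ren G (k' :: G) := fun k v => vs G k k' v.

Definition ren_lift G D k' (r : ren G D) : ren (k' :: G) (k' :: D) :=
  ren_cons (vz D k') (fun k v => vs D k k' (r k v)).

Arguments ren_lift {G D} k' r [k] v.

Fixpoint rename_term G D (r : ren G D) k (t : term G k) : term D k :=
  match t with
  | tvar _ _ v => tvar D _ (r _ v)
  | tfun _ f ts => tfun D f (rename_terms G D r _ ts)
  end
with rename_terms G D (r : ren G D) l (ts : terms G l) : terms D l :=
  match ts with
  | tnil _ => tnil D
  | tcons _ _ _ t ts' => tcons D _ _ (rename_term G D r _ t) (rename_terms G D r _ ts')
  end.

Arguments rename_term {G D} r {k} t.
Arguments rename_terms {G D} r {l} ts.

Fixpoint rename G (phi : formula G) : forall D, ren G D -> formula D :=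
  match phi with
  | fEq _ _ t u => fun D r => fEq D _ (rename_term r t) (rename_term r u)
  | fRel _ R ts => fun D r => fRel D R (rename_terms r ts)
  | fTop _ => fun D r => fTop D
  | fAnd _ p q => fun D r => fAnd D (rename _ p D r) (rename _ q D r)
  | fOr _ J ps => fun D r => fOr D J (fun i => rename _ (ps i) D r)
  | fEx _ k p => fun D r => fEx D k (rename _ p _ (ren_lift k r))
  end.

Arguments rename {G} phi {D} r.

Definition sub_cons G D k' (x : term D k') (s : sub G D) : sub (k' :: G) D :=
  fun k v =>
  match v in var G0 k0
    return match G0 with
           | [] => unit
           | k1 :: G1 => term D k1 -> sub G1 D -> term D k0 end with
  | vz _ _ => fun x _ => x
  | vs _ _ _ v' => fun _ s => s _ v'
  end x s.

Arguments sub_cons {G D k'} x s [k] v.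

Definition sub_lift G D k' (s : sub G D) : sub (k' :: G) (k' :: D) :=
  sub_cons (tvar _ _ (vz D k')) (fun k v => rename_term (ren_wk D k') (s k v)).

Arguments sub_lift {G D} k' s [k] v.

Fixpoint subst_term G D (s : sub G D) k (t : term G k) : term D k :=
  match t with
  | tvar _ _ v => s _ v
  | tfun _ f ts => tfun D f (subst_terms G D s _ ts)
  end
with subst_terms G D (s : sub G D) l (ts : terms G l) : terms D l :=
  match ts with
  | tnil _ => tnil D
  | tcons _ _ _ t ts' => tcons D _ _ (subst_term G D s _ t) (subst_terms G D s _ ts')
  end.

Arguments subst_term {G D} s {k} t.
Arguments subst_terms {G D} s {l} ts.

Fixpoint subst G (phi : formula G) : forall D, sub G D -> formula D :=
  match phi with
  | fEq _ _ t u => fun D s => fEq D _ (subst_term s t) (subst_term s u)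
  | fRel _ R ts => fun D s => fRel D R (subst_terms s ts)
  | fTop _ => fun D s => fTop D
  | fAnd _ p q => fun D s => fAnd D (subst _ p D s) (subst _ q D s)
  | fOr _ J ps => fun D s => fOr D J (fun i => subst _ (ps i) D s)
  | fEx _ k p => fun D s => fEx D k (subst _ p _ (sub_lift k s))
  end.

Arguments subst {G} phi {D} s.

Definition theory := forall G, formula G -> formula G -> Prop.

(* Deduction system for geometric logic (Johnstone, Elephant D1.3.1) *)
Inductive proves (T : theory) : forall G, formula G -> formula G -> Prop :=
| pr_axiom : forall G p q, T G p q -> proves T G p q
| pr_id : forall G p, proves T G p p
| pr_cut : forall G p q r, proves T G p q -> proves T G q r -> proves T G p r
| pr_subst : forall G D p q (s : sub G D),
    proves T G p q -> proves T D (subst p s) (subst q s)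
| pr_eq_refl : forall k, proves T [k] (fTop [k])
    (fEq [k] _ (tvar _ _ (vz [] k)) (tvar _ _ (vz [] k)))
| pr_eq_subst : forall G k (p : formula (k :: G)),
    proves T (k :: k :: G)
      (fAnd _ (fEq _ _ (tvar _ _ (vz (k :: G) k)) (tvar _ _ (vs _ _ k (vz G k))))
              (rename p (ren_cons (vz (k :: G) k)
                           (fun k0 v => vs _ _ k (vs _ _ k v)))))
      (rename p (ren_cons (vs _ _ k (vz G k))
                   (fun k0 v => vs _ _ k (vs _ _ k v))))
| pr_top : forall G p, proves T G p (fTop G)
| pr_and_l : forall G p q, proves T G (fAnd G p q) p
| pr_and_r : forall G p q, proves T G (fAnd G p q) q
| pr_and_intro : forall G p q r,
    proves T G p q -> proves T G p r -> proves T G p (fAnd G q r)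
| pr_or_intro : forall G I (ps : I -> formula G) i, proves T G (ps i) (fOr G I ps)
| pr_or_elim : forall G I (ps : I -> formula G) q,
    (forall i, proves T G (ps i) q) -> proves T G (fOr G I ps) q
| pr_ex_intro : forall G k (p : formula (k :: G)) (q : formula G),
    proves T (k :: G) p (rename q (ren_wk G k)) -> proves T G (fEx G k p) q
| pr_ex_elim : forall G k (p : formula (k :: G)) (q : formula G),
    proves T G (fEx G k p) q -> proves T (k :: G) p (rename q (ren_wk G k))
| pr_distr : forall G p I (qs : I -> formula G),
    proves T G (fAnd G p (fOr G I qs)) (fOr G I (fun i => fAnd G p (qs i)))
| pr_frob : forall G k p (q : formula (k :: G)),
    proves T G (fAnd G p (fEx G k q)) (fEx G k (fAnd _ (rename p (ren_wk G k)) q)).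

Fixpoint env (C : sort S -> Type) (G : list (sort S)) : Type :=
  match G with [] => unit | k :: G' => (C k * env C G')%type end.

Fixpoint lookup C G k (v : var G k) : env C G -> C k :=
  match v in var G0 k0 return env C G0 -> C k0 with
  | vz _ _ => fun e => fst e
  | vs _ _ _ v' => fun e => lookup C _ _ v' (snd e)
  end.

Arguments lookup {C G k} v e.

Fixpoint env_app C G D : env C G -> env C D -> env C (G ++ D) :=
  match G with
  | [] => fun _ d => d
  | k :: G' => fun e d => (fst e, env_app C G' D (snd e) d)
  end.

Fixpoint map_env C C' (h : forall k, C k -> C' k) G : env C G -> env C' G :=
  match G with
  | [] => fun _ => tt
  | k :: G' => fun e => (h k (fst e), map_env C C' h G' (snd e))
  end.

Fixpoint env_rel C C' (R : forall k, C k -> C' k -> Prop) G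
  : env C G -> env C' G -> Prop :=
  match G with
  | [] => fun _ _ => True
  | k :: G' => fun e e' => R k (fst e) (fst e') /\ env_rel C C' R G' (snd e) (snd e')
  end.

Record structure (C : sort S -> Type) := {
  sfun : forall f : fsym S, env C (fdom S f) -> C (fcod S f);
  srel : forall R : rsym S, env C (rdom S R) -> Prop }.

Section Sem.
Variables (C : sort S -> Type) (M : structure C).

Fixpoint eval G k (t : term G k) (e : env C G) : C k :=
  match t with
  | tvar _ _ v => lookup v e
  | tfun _ f ts => sfun C M f (evals _ _ ts e)
  end
with evals G l (ts : terms G l) (e : env C G) : env C l :=
  match ts with
  | tnil _ => tt
  | tcons _ _ _ t ts' => (eval _ _ t e, evals _ _ ts' e)
  end.

Fixpoint sat G (phi : formula G) : env C G -> Prop :=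
  match phi with
  | fEq _ _ t u => fun e => eval _ _ t e = eval _ _ u e
  | fRel _ R ts => fun e => srel C M R (evals _ _ ts e)
  | fTop _ => fun _ => True
  | fAnd _ p q => fun e => sat _ p e /\ sat _ q e
  | fOr _ J ps => fun e => exists i, sat _ (ps i) e
  | fEx _ k p => fun e => exists a : C k, sat _ p (a, e)
  end.
End Sem.

Arguments sat {C} M {G} phi e.
Arguments map_env {C C'} h {G} e.
Arguments env_app {C G D} e d.
Arguments env_rel {C C'} R {G} e e'.

Definition is_model (T : theory) C (M : structure C) : Prop :=
  forall G p q, T G p q -> forall e : env C G, sat M p e -> sat M q e.

Definition is_hom C D (M : structure C) (N : structure D)
  (h : forall k, C k -> D k) : Prop :=
  (forall f e, h _ (sfun C M f e) = sfun D N f (map_env h e)) /\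
  (forall R e, srel C M R e -> srel D N R (map_env h e)).

Arguments is_model T {C} M.
Arguments is_hom {C D} M N h.

(* Model groupoids.  Models are sets: their carriers are subsets of a  *)
(* common ambient type per sort (so that unions of models make sense). *)
Record gmodel (A : sort S -> Type) := {
  gcar : forall k, A k -> Prop;
  gstr : structure (fun k => {a : A k | gcar k a}) }.

Arguments gcar {A} g k a.
Arguments gstr {A} g.

Definition carrier A (M : gmodel A) (k : sort S) := {a : A k | gcar M k a}.
Arguments carrier {A} M k.

Record model_groupoid (T : theory) := {
  amb : sort S -> Type;
  X0 : gmodel amb -> Prop;
  X1 : forall M N : gmodel amb, (forall k, carrier M k -> carrier N k) -> Prop;
  X0_model : forall M, X0 M -> is_model T (gstr M);
  X1_ob : forall M N a, X1 M N a -> X0 M /\ X0 N;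
  X1_hom : forall M N a, X1 M N a -> is_hom (gstr M) (gstr N) a;
  X1_id : forall M, X0 M -> X1 M M (fun k x => x);
  X1_comp : forall M N P a b, X1 M N a -> X1 N P b -> X1 M P (fun k x => b k (a k x));
  X1_inv : forall M N a, X1 M N a -> exists b, X1 N M b /\
      (forall k x, b k (a k x) = x) /\ (forall k y, a k (b k y) = y) }.

Section Groupoid.
Variables (T : theory) (X : model_groupoid T).

Definition Mod := gmodel (amb T X).
Definition car (M : Mod) := carrier M.

Definition interp G (phi : formula G) (M : Mod) (n : env (car M) G) : Prop :=
  X0 T X M /\ sat (gstr M) phi n.

Definition conservative : Prop :=
  forall G (p q : formula G),
    (forall M n, interp G p M n -> interp G q M n) -> proves T G p q.

(* An indexing: for each sort a set of parameters, and for each model in X0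
   a partial surjection from parameters onto the carrier (as a functional,
   surjective relation "p denotes a"). *)
Record indexing := {
  param : sort S -> Type;
  den : forall (M : Mod) k, param k -> car M k -> Prop;
  den_fun : forall M k p a b, den M k p a -> den M k p b -> a = b;
  den_surj : forall M k (a : car M k), X0 T X M -> exists p, den M k p a }.

Definition interp_par (I : indexing) G D (psi : formula (G ++ D))
  (m : env (param I) D) (M : Mod) (n : env (car M) G) : Prop :=
  X0 T X M /\ exists d : env (car M) D,
    env_rel (den I M) m d /\ sat (gstr M) psi (env_app n d).

Definition orbit (I : indexing) G D (psi : formula (G ++ D))
  (m : env (param I) D) (N : Mod) (n : env (car N) G) : Prop :=
  exists (M : Mod) alpha, X1 T X M N alpha /\
    exists n0 : env (car M) G, map_env alpha n0 = n /\ interp_par I G D psi m M n0.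

Definition eliminates_parameters (I : indexing) : Prop :=
  forall G D (psi : formula (G ++ D)) (m : env (param I) D),
    exists phi : formula G,
      forall N n, orbit I G D psi m N n <-> interp G phi N n.

Definition triv_param k := {a : amb T X k | exists M, X0 T X M /\ gcar M k a}.
Definition triv_den (M : Mod) k (p : triv_param k) (a : car M k) : Prop :=
  proj1_sig p = proj1_sig a.

Lemma triv_den_fun : forall M k p a b, triv_den M k p a -> triv_den M k p b -> a = b.
Proof.
  intros M k p [a Ha] [b Hb]; unfold triv_den; simpl; intros E1 E2.
  rewrite E1 in E2. subst b. f_equal. apply proof_irrelevance.
Qed.

Lemma triv_den_surj : forall M k (a : car M k), X0 T X M -> exists p, triv_den M k p a.
Proof.
  intros M k [a Ha] HM.
  exists (exist _ a (ex_intro _ M (conj HM Ha))). reflexivity.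
Qed.

Definition trivial_indexing : indexing :=
  {| param := triv_param; den := triv_den;
     den_fun := triv_den_fun; den_surj := triv_den_surj |}.
End Groupoid.

Definition decidable (T : theory) : Prop :=
  forall k : sort S, exists ne : formula [k; k],
    proves T [k; k]
      (fAnd _ (fEq _ _ (tvar _ _ (vz [k] k)) (tvar _ _ (vs _ _ k (vz [] k)))) ne)
      (fBot [k; k]) /\
    proves T [k; k] (fTop [k; k])
      (fOr2 _ (fEq _ _ (tvar _ _ (vz [k] k)) (tvar _ _ (vs _ _ k (vz [] k)))) ne).

End Syntax.

Arguments conservative {S T} X.
Arguments eliminates_parameters {S T X} I.
Arguments trivial_indexing {S T} X.
Arguments decidable {S} T.

From Stdlib Require Import List Classical ClassicalEpsilon ProofIrrelevance.
Import ListNotations.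

(* For two parameters m <> m' of the trivial indexing, the
   pattern "x = m /\ x' = m'" has as orbit the set of pairs <alpha m, alpha m'>
   with alpha an arrow of X; since arrows of the groupoid are injective, every
   pair in that orbit consists of distinct elements, and every pair <a, b> of
   distinct elements of a model lies in the orbit of its own parameters (take
   alpha the identity).  Elimination of parameters makes each such orbit
   definable by a parameter-free formula; the disjunction [apartness k] of all
   these formulas therefore defines, in every model of X, exactly the relation
   a <> b.  Finally, conservativity turns the two semantic facts
   "x = x' /\ x <> x' is empty" and "x = x' \/ x <> x' is everything"
   into the two sequents required for decidability. *)

Section Decidability.
Variables (S : signature) (T : theory S) (X : model_groupoid S T).

Definition holds2 k (phi : formula S [k; k]) (N : Mod S T X)
  (a b : car S T X N k) : Prop :=
  sat S _ (gstr S _ N) _ phi (a, (b, tt)).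
Arguments holds2 {k} phi {N} a b.

Lemma car_eq_of_val {N : Mod S T X} {k} {a b : car S T X N k} :
  proj1_sig a = proj1_sig b -> a = b.
Proof.
  destruct a as [a Ha], b as [b Hb]; simpl; intros <-.
  f_equal; apply proof_irrelevance.
Qed.

Lemma arrow_injective {M N : Mod S T X} {al k} {a b : car S T X M k} :
  X1 S T X M N al -> al k a = al k b -> a = b.
Proof.
  intros Hal Eab.
  destruct (X1_inv S T X M N al Hal) as [be [_ [Hbe _]]].
  rewrite <- (Hbe k a), <- (Hbe k b), Eab; reflexivity.
Qed.

Lemma decidable_of_defined_inequality :
  conservative X ->
  (forall k, exists ne : formula S [k; k],
     forall N (a b : car S T X N k), X0 S T X N -> (holds2 ne a b <-> a <> b)) ->
  decidable T.
Proof.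
  intros Hcons Hdef k.
  destruct (Hdef k) as [ne Hne]; exists ne; split; apply Hcons.
  - intros N [a [b []]] [HN [Eab Hab]].
    exfalso; exact (proj1 (Hne N a b HN) Hab Eab).
  - intros N [a [b []]] [HN _]; split; [exact HN |].
    destruct (classic (a = b)) as [Eab | Eab].
    + exists true; exact Eab.
    + exists false; exact (proj2 (Hne N a b HN) Eab).
Qed.

Definition triv_param_of_elt {N : Mod S T X} {k} (a : car S T X N k)
  (HN : X0 S T X N) : triv_param S T X k :=
  exist _ (proj1_sig a) (ex_intro _ N (conj HN (proj2_sig a))).

Hypothesis elim : eliminates_parameters (trivial_indexing X).
Variable k : sort S.

(* The pattern  x = m /\ x' = m'  in context x, x' with parameters m, m'. *)
Definition pair_pattern : formula S ([k; k] ++ [k; k]) :=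
  fAnd S [k; k; k; k]
    (fEq S _ k (tvar S _ k (vz S _ k))
       (tvar S _ k (vs S _ _ _ (vs S _ _ _ (vz S _ _)))))
    (fEq S _ k (tvar S _ k (vs S _ _ _ (vz S _ _)))
       (tvar S _ k (vs S _ _ _ (vs S _ _ _ (vs S _ _ _ (vz S _ _)))))).

Definition distinct_params : Type :=
  {pq : triv_param S T X k * triv_param S T X k |
     proj1_sig (fst pq) <> proj1_sig (snd pq)}.

Definition pair_orbit (i : distinct_params) (N : Mod S T X)
  (n : env S (car S T X N) [k; k]) : Prop :=
  orbit S T X (trivial_indexing X) [k; k] [k; k] pair_pattern
    (fst (proj1_sig i), (snd (proj1_sig i), tt)) N n.

(* Every pair in the orbit of two distinct parameters is a pair of distinct
   elements: it is the image of the parameters under an injective arrow. *)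
Lemma pair_orbit_apart i {N} {a b : car S T X N k} :
  pair_orbit i N (a, (b, tt)) -> a <> b.
Proof.
  intros [M [al [Hal [[a0 [b0 []]] [Hn0 [_ [[c [c' []]] [Hd Hsat]]]]]]]] Eab.
  destruct i as [[p p'] Hpp]; simpl in *.
  destruct Hd as [Hc [Hc' _]], Hsat as [Ea0 Eb0].
  injection Hn0; intros Eb Ea.
  apply Hpp; unfold triv_den in Hc, Hc'.
  rewrite Hc, Hc', <- Ea0, <- Eb0.
  f_equal; apply (arrow_injective Hal); congruence.
Qed.

(* A pair of distinct elements of a model lies in the orbit of the pair of
   parameters denoting them, via the identity arrow. *)
Lemma pair_orbit_self {N} {a b : car S T X N k} :
  X0 S T X N -> a <> b -> exists i, pair_orbit i N (a, (b, tt)).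
Proof.
  intros HN Eab.
  assert (Hval : proj1_sig a <> proj1_sig b)
    by (intro E; apply Eab, car_eq_of_val, E).
  exists (exist _ (triv_param_of_elt a HN, triv_param_of_elt b HN) Hval).
  exists N, (fun _ x => x); split; [apply X1_id, HN |].
  exists (a, (b, tt)); split; [reflexivity |].
  split; [exact HN |].
  exists (a, (b, tt)); simpl; unfold triv_den; simpl; tauto.
Qed.

Definition orbit_definition (i : distinct_params) :
  {phi : formula S [k; k] |
     forall N n, pair_orbit i N n <-> interp S T X [k; k] phi N n} :=
  constructive_indefinite_description _
    (elim [k; k] [k; k] pair_pattern
       (fst (proj1_sig i), (snd (proj1_sig i), tt))).

Definition apartness : formula S [k; k] :=
  fOr S [k; k] distinct_params (fun i => proj1_sig (orbit_definition i)).

Lemma apartness_sound {N} {a b : car S T X N k} :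
  X0 S T X N -> holds2 apartness a b -> a <> b.
Proof.
  intros HN [i Hphi].
  apply (pair_orbit_apart i), (proj2 (proj2_sig (orbit_definition i) N _)).
  split; assumption.
Qed.

Lemma apartness_complete {N} {a b : car S T X N k} :
  X0 S T X N -> a <> b -> holds2 apartness a b.
Proof.
  intros HN Eab.
  destruct (pair_orbit_self HN Eab) as [i Hi].
  exists i; apply (proj1 (proj2_sig (orbit_definition i) N _) Hi).
Qed.

End Decidability.

Theorem mainTheorem13 (S : signature) (T : theory S) (X : model_groupoid S T) :
  conservative X ->
  eliminates_parameters (trivial_indexing X) ->
  decidable T.
Proof.
  intros Hcons Helim.
  apply (decidable_of_defined_inequality S T X Hcons); intro k.
  exists (apartness S T X Helim k); intros N a b HN; split.
  - exact (apartness_sound S T X Helim k HN).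
  - exact (apartness_complete S T X Helim k HN).
Qed.
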